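(* Consider any fixed training set $S_{\mathrm{e2e}}=\{(x^{(i)},y^{(i)}):i\in[m]\}$ with $y^{(i)}=h_*(x^{(i)})$ for some $h_*\in\mathrm{e2e}^T(\mathcal F)$. There is a universal constant $c>0$ such that for any $\delta\in(0,1)$, the Boosting Algorithm invoked with per-thinker budget $\mathsf M_\star=c\,\mathrm{VCdim}(\mathrm{e2e}^T(\mathcal F))$, with the thinkers $f_{k,\ell}$ chosen adversarially (each $f_{k,\ell}\in\mathcal F$ with $\mathrm{e2e}^T_{f_{k,\ell}}\equiv h_*$, possibly depending on the whole history and on the current sampled index set $\mathcal S_{k,\ell}$), satisfies, with probability at least $1-\delta/2$ over its internal randomness of subsampling, simultaneously for all $k\in[K]$: $$\epsilon_k:=\Pr_{i\sim D^{(k)}}\big[\mathrm{e2e}^T_{\hat f_k}(x^{(i)})\ne h_*(x^{(i)})\big]\le0.25.$$ Moreover, in the relaxed protocol where each $f_{k,\ell}$ is fixed by the adversary before observing $\mathcal S_{k,\ell}$, the same guarantee holds with $\mathsf M_\star=c\,\mathrm{VCdim}(\mathcal L^T_{\mathrm{CoT}}(\mathcal F))=O(\mathrm{VCdim}(\mathcal F)\log T)$.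
   Context: Autoregressive generation: for $f:\{0,1\}^*\to\{0,1\}$, $\bar f(x)=(x,f(x))$; $\mathrm{e2e}^T_f(x)$ is the last bit of $\bar f^{\circ T}(x)$ and $\mathrm{CoT}^T_f(x)=(\mathrm{e2e}^1_f(x),\dots,\mathrm{e2e}^T_f(x))$; $\mathrm{e2e}^T(\mathcal F)=\{\mathrm{e2e}^T_f:f\in\mathcal F\}$. $\mathcal L^T_{\mathrm{CoT}}(\mathcal F)=\{(x,z)\mapsto\mathbb 1\{z\ne\mathrm{CoT}^T_f(x)\}:f\in\mathcal F\}$; $\mathrm{VCdim}(\mathcal F)$ is on $\mathcal X\times\{0,1\}^T$. Boosting Algorithm (input $S_{\mathrm{e2e}}$, $K$, $\mathsf M_\star$, $\delta$): $D^{(1)}$ uniform on $[m]$. For $k=1,\dots,K$: for $\ell=1,\dots,\log(2K/\delta)$: draw $\mathcal S_{k,\ell}$ consisting of $\mathsf M_\star$ indices i.i.d. from $D^{(k)}$; obtain $\mathrm{CoT}^T_{f_{k,\ell}}(x^{(i)})$ for $i\in\mathcal S_{k,\ell}$ from an adversarially chosen thinker $f_{k,\ell}$; find $\hat f_{k,\ell}\in\mathcal F$ whose CoTs agree with all observed CoTs; let $\epsilon_{k,\ell}=\sum_iD^{(k)}_i\mathbb 1[\mathrm{e2e}^T_{\hat f_{k,\ell}}(x^{(i)})\ne y^{(i)}]$ and stop the inner loop if $\epsilon_{k,\ell}\le0.25$. $\hat f_k$ is the last $\hat f_{k,\ell}$. If its error $\epsilon_k=0$ the algorithm stops; otherwise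 $\alpha_k=\frac12\log\frac{1-\epsilon_k}{\epsilon_k}$ and $D^{(k+1)}_i\propto D^{(k)}_ie^{\pm\alpha_k}$ ($+$ if $\hat f_k$ errs end-to-end on $i$, $-$ otherwise), normalized. *)

From Stdlib Require Import Reals.
From mathcomp Require Import all_boot all_order all_algebra.
From mathcomp Require Import Rstruct.
Set Implicit Arguments. Unset Strict Implicit. Unset Printing Implicit Defensive.
Import Order.TTheory GRing.Theory Num.Theory.
Local Open Scope ring_scope.

Definition fbar (f : seq bool -> bool) (x : seq bool) : seq bool := rcons x (f x).
Definition e2e (T : nat) (f : seq bool -> bool) (x : seq bool) : bool :=
  last false (iter T (fbar f) x).
Definition CoT (T : nat) (f : seq bool -> bool) (x : seq bool) : T.-tuple bool :=
  [tuple e2e (i.+1) f x | i < T].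

Definition e2e_class (T : nat) (F : (seq bool -> bool) -> Prop) :
  (seq bool -> bool) -> Prop :=
  fun h => exists f, F f /\ h = e2e T f.
Definition Lcot_class (T : nat) (F : (seq bool -> bool) -> Prop) :
  (seq bool * T.-tuple bool -> bool) -> Prop :=
  fun h => exists f, F f /\ h = (fun p => p.2 != CoT T f p.1).
Arguments Lcot_class : clear implicits.

Definition shatters (U : eqType) (dom : U -> Prop) (H : (U -> bool) -> Prop)
  (A : seq U) : Prop :=
  [/\ uniq A, (forall u, u \in A -> dom u) &
      forall lab : U -> bool, exists h, H h /\ forall u, u \in A -> h u = lab u].
Definition VCdim_is (U : eqType) (dom : U -> Prop) (H : (U -> bool) -> Prop)
  (d : nat) : Prop :=
  (exists A, size A = d /\ shatters dom H A) /\
  (forall A, shatters dom H A -> (size A <= d)%N).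

Section Boosting.
Variables (m M T : nat) (xs : 'I_m -> seq bool) (ys : 'I_m -> bool).

(* a sampled multiset S_{k,l} of M indices, and the observed CoTs on it *)
Definition sample := {ffun 'I_M -> 'I_m}.
Definition observation := {ffun 'I_M -> T.-tuple bool}.
Definition history := seq (sample * observation).

(* E_{S ~ D^M} [V S]  (M indices drawn i.i.d. from D) *)
Definition expect_sample (D : 'I_m -> R) (V : sample -> R) : R :=
  \sum_(S : sample) (\prod_(j < M) D (S j)) * V S.

Definition e2e_err (g : seq bool -> bool) (i : 'I_m) : bool :=
  e2e T g (xs i) != ys i.

Definition weighted_err (D : 'I_m -> R) (g : seq bool -> bool) : R :=
  \sum_(i < m) D i * (e2e_err g i)%:R.

(* AdaBoost reweighting with alpha = 1/2 log((1-eps)/eps) *)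
Definition reweight (D : 'I_m -> R) (g : seq bool -> bool) : 'I_m -> R :=
  let eps := weighted_err D g in
  let alpha := ln ((1 - eps) / eps) / 2 in
  let w := fun i => D i * exp (if e2e_err g i then alpha else - alpha) in
  fun i => w i / \sum_(k < m) w k.

(* adversary: chooses the thinker f_{k,l} from the history and the current
   sample set; learner: chooses hat f_{k,l} from the history, the current
   sample set and the observed CoTs. *)
Variable adv : history -> sample -> (seq bool -> bool).
Variable lrn : history -> sample -> observation -> (seq bool -> bool).
Variable L : nat. (* number of inner iterations *)

(* inner loop with l remaining tries; [cont] continues with hat f_k,
   eps_k and the updated history once eps_{k,l} <= 1/4.  If all tries fail,
   hat f_k has eps_k > 1/4 and the event of interest fails (value 0). *)
Fixpoint inner (l : nat) (D : 'I_m -> R) (hist : history)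
  (cont : (seq bool -> bool) -> R -> history -> R) : R :=
  match l with
  | 0 => 0
  | l'.+1 => expect_sample D (fun S =>
      let f := adv hist S in
      let o : observation := [ffun j => CoT T f (xs (S j))] in
      let fh := lrn hist S o in
      let hist' := rcons hist (S, o) in
      let eps := weighted_err D fh in
      if eps <= 1 / 4 then cont fh eps hist' else inner l' D hist' cont)
  end.

(* outer loop with n remaining rounds: probability that every executed
   round k has eps_k <= 1/4. *)
Fixpoint outer (n : nat) (D : 'I_m -> R) (hist : history) : R :=
  match n with
  | 0 => 1
  | n'.+1 => inner L D hist (fun fh eps hist' =>
      if eps == 0 then 1 else outer n' (reweight D fh) hist')
  end.

Definition boost_success_prob (K : nat) : R :=
  outer K (fun _ => 1 / m%:R) [::].

End Boosting.

Definition inner_iters (K : nat) (delta : R) : nat :=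
  `|Num.ceil (ln (2 * K%:R / delta))|%N.
Definition budget (c : R) (d : nat) : nat := `|Num.ceil (c * d%:R)|%N.

From Stdlib Require Import Reals.
From mathcomp Require Import all_boot all_order all_algebra.
From mathcomp Require Import Rstruct boolp lra zify.
Set Implicit Arguments. Unset Strict Implicit. Unset Printing Implicit Defensive.
Import Order.TTheory GRing.Theory Num.Theory.

(* A try of the inner loop fails only if the learned thinker is wrong on a set
   of [D]-mass above 1/4 that contains none of the [M] sampled indices.  In the
   adaptive protocol such sets belong to the class of end-to-end error sets
   {i | e2e_g(x_i) <> y_i}; when the thinker is fixed before sampling they
   belong to the class of CoT disagreements with that thinker, a trace of the
   CoT loss class.  Either way the class has VC dimension at most d, and the
   epsilon-net theorem (double sampling, random swaps, and the Sauer-Shelah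
   bound obtained from Pajor's lemma) bounds the failure probability of a try
   by 1/3 once M >= 300 d.  Hence a round fails with probability at most
   (1/3)^L <= delta / 2K, and a union bound over the K rounds concludes. *)

(** * Sauer-Shelah via Pajor's lemma *)

Section SauerShelah.
Variable Pt : finType.
Implicit Types (P : {set {ffun Pt -> bool}}) (A : {set Pt}).

Definition shattersb P A : bool :=
  [forall g : {ffun Pt -> bool}, [exists q in P, [forall x in A, q x == g x]]].

Definition shattered P : {set {set Pt}} := [set A | shattersb P A].

Lemma shattersbS P P' A : P \subset P' -> shattersb P A -> shattersb P' A.
Proof.
move=> sPP' /forallP PA; apply/forallP => g.
have /existsP[q /andP[qP qg]] := PA g.
by apply/existsP; exists q; rewrite (subsetP sPP').
Qed.

Lemma shattersb_const P A x b :
  (forall q, q \in P -> q x = b) -> x \in A -> ~~ shattersb P A.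
Proof.
move=> Pb xA; apply/negP => /forallP /(_ [ffun _ => ~~ b]).
case/existsP=> q /andP[qP /forallP /(_ x)].
by rewrite xA ffunE Pb //; case: (b).
Qed.

Lemma shattersb_setU1 P A x :
  let B := [set q : {ffun Pt -> bool} | q x] in
  shattersb (P :&: B) A -> shattersb (P :\: B) A -> shattersb P (x |: A).
Proof.
move=> B P1A P0A; apply/forallP => g.
have [Pi [Pix sPi PiA]] : exists Pi : {set {ffun Pt -> bool}},
    [/\ forall q, q \in Pi -> q x = g x, Pi \subset P & shattersb Pi A].
  case: (g x); [exists (P :&: B) | exists (P :\: B)].
    by split=> // [q|]; [rewrite !inE => /andP[] | exact: subsetIl].
  by split=> // [q|]; [rewrite !inE => /andP[/negbTE] | exact: subsetDl].
have /existsP[q /andP[qPi /forallP qg]] := forallP PiA g.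
apply/existsP; exists q; rewrite (subsetP sPi) //=; apply/forallP => y.
by rewrite !inE; case: eqP => [->|_] /=; [rewrite Pix | exact: qg].
Qed.

(* Split [P] along a coordinate [x]: the sets shattered by both halves are
   counted twice on the left, once as they are and once with [x] added. *)
Lemma card_shattered_split P x :
  let B := [set q : {ffun Pt -> bool} | q x] in
  (#|shattered (P :&: B)| + #|shattered (P :\: B)| <= #|shattered P|)%N.
Proof.
rewrite /=; set P1 := P :&: _; set P0 := P :\: _.
set S1 := shattered P1; set S0 := shattered P0.
have P1x q : q \in P1 -> q x = true by rewrite !inE => /andP[].
have P0x q : q \in P0 -> q x = false by rewrite !inE => /andP[/negbTE].
have sP1 : P1 \subset P by apply/subsetP => q; rewrite !inE => /andP[].
have sP0 : P0 \subset P by apply/subsetP => q; rewrite !inE => /andP[].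
have x_notin A : A \in S0 :&: S1 -> x \notin A.
  rewrite !inE => /andP[S0A _]; apply/negP => xA.
  by move/negP: (shattersb_const P0x xA).
set I := [set x |: A | A in S0 :&: S1].
have card_I : #|I| = #|S0 :&: S1|.
  apply: card_in_imset => A A' A_S A'_S eqxA.
  by rewrite -(setU1K (x_notin _ A_S)) eqxA setU1K ?x_notin.
have sUP : S0 :|: S1 \subset shattered P.
  apply/subsetP => A; rewrite !inE.
  by case/orP; [exact: shattersbS sP0 | exact: shattersbS sP1].
have sIP : I \subset shattered P.
  apply/subsetP => _ /imsetP[A + ->]; rewrite !inE => /andP[S0A S1A].
  exact: shattersb_setU1.
have UI0 : (S0 :|: S1) :&: I = set0.
  apply/setP => B; rewrite !inE; apply/negP => /andP[S_B /imsetP[A _ eqB]].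
  have xB : x \in B by rewrite eqB setU11.
  by case/orP: S_B; apply/negP; [exact: shattersb_const P0x xB |
                                  exact: shattersb_const P1x xB].
have sUIP : S0 :|: S1 :|: I \subset shattered P by rewrite subUset sUP sIP.
have := subset_leq_card sUIP; have := cardsUI S0 S1; have := cardsUI (S0 :|: S1) I.
rewrite UI0 cards0 card_I addn0 => eq1 eq2.
by rewrite addnC -eq2 -eq1.
Qed.

Lemma card_le_shattered P : (#|P| <= #|shattered P|)%N.
Proof.
have [n] := ubnP #|P|; elim: n P => // n IH P; rewrite ltnS => Pn.
have [P_le1|/card_gt1P[q1 [q2 [q1P q2P q12]]]] := leqP #|P| 1.
  have [->|/card_gt0P[q0 q0P]] := posnP #|P|; first by [].
  apply: leq_trans P_le1 _; apply/card_gt0P; exists set0; rewrite inE.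
  apply/forallP => g; apply/existsP; exists q0.
  by rewrite q0P; apply/forallP => x; rewrite inE.
have [x q12x] : exists x, q1 x != q2 x.
  apply/existsP; apply: contraR q12 => /existsPn q12; apply/eqP/ffunP => x.
  exact/eqP/negPn/q12.
have [q [q' [qP q'P qx q'x]]] : exists q q', [/\ q \in P, q' \in P, q x & ~~ q' x].
  move: q12x; case e1: (q1 x); case e2: (q2 x) => // _;
  by [exists q1, q2; rewrite e1 e2 | exists q2, q1; rewrite e1 e2].
set B := [set q : {ffun Pt -> bool} | q x].
have card_lt (P' : {set {ffun Pt -> bool}}) r : r \in P -> r \notin P' ->
    P' \subset P -> (#|P'| < n)%N.
  move=> rP rP' sP'P; apply: leq_trans Pn; apply: proper_card.
  by apply/properP; split=> //; exists r.
have q'_notin : q' \notin P :&: B by rewrite !inE (negbTE q'x) andbF.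
have q_notin : q \notin P :\: B by rewrite !inE qx.
have IH1 := IH _ (card_lt _ _ q'P q'_notin (subsetIl _ _)).
have IH0 := IH _ (card_lt _ _ qP q_notin (subsetDl _ _)).
rewrite -(cardsID B P); apply: leq_trans (card_shattered_split P x).
exact: leq_add.
Qed.

Definition sauer_bound (n d : nat) : nat := \sum_(i < d.+1) 'C(n, i).

Lemma card_small_sets d :
  #|[set A : {set Pt} | (#|A| <= d)%N]| = sauer_bound #|Pt| d.
Proof.
elim: d => [|d IH].
  by rewrite /sauer_bound big_ord1 -card_draws; apply: eq_card => A; rewrite !inE leqn0.
rewrite /sauer_bound in IH *; rewrite big_ord_recr /= -IH -card_draws.
rewrite -(cardsID [set A : {set Pt} | (#|A| <= d)%N]
                  [set A : {set Pt} | (#|A| <= d.+1)%N]).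
by congr (_ + _)%N; apply: eq_card => A; rewrite !inE; apply/idP/idP; lia.
Qed.

Lemma sauer_shelah P d : (forall A, shattersb P A -> (#|A| <= d)%N) ->
  (#|P| <= sauer_bound #|Pt| d)%N.
Proof.
move=> small; rewrite -card_small_sets; apply: leq_trans (card_le_shattered P) _.
by apply/subset_leq_card/subsetP => A; rewrite !inE => /small.
Qed.

End SauerShelah.

Local Open Scope ring_scope.

Lemma sauer_bound_mulX_le (n d : nat) (t : R) : 0 < t <= 1 ->
  (sauer_bound n d)%:R * t ^+ d <= (t + 1) ^+ n.
Proof.
case/andP=> t_gt0 t_le1; pose F i := t ^+ i *+ 'C(n, i).
have F_ge0 i : 0 <= F i by rewrite mulrn_wge0 // exprn_ge0 // ltW.
rewrite exprD1n natr_sum mulr_suml.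
apply: (@le_trans _ _ (\sum_(i < d.+1) F i)).
  apply: ler_sum => i _; rewrite mulrC mulr_natr lerMn2r; apply/orP; right.
  by apply: ler_wiXn2l => //; [exact: ltW | rewrite -ltnS].
rewrite (big_ord_widen (d.+1 + n) F (leq_addr _ _)).
apply: (@le_trans _ _ (\sum_(i < d.+1 + n) F i)).
  rewrite [X in _ <= X](bigID (fun i : 'I_(d.+1 + n) => (i < d.+1)%N)) /= lerDl.
  exact: sumr_ge0.
rewrite (big_ord_widen (d.+1 + n) F (_ : n.+1 <= d.+1 + n)%N); last by lia.
rewrite [X in X <= _](bigID (fun i : 'I_(d.+1 + n) => (i < n.+1)%N)) /=.
by rewrite [X in _ + X]big1 ?addr0 // => i; rewrite -leqNgt /F => /bin_small->.
Qed.

Lemma sauer_bound_le_pow (n d : nat) :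
  (sauer_bound n d)%:R <= 64 ^+ d * (65 / 64) ^+ n :> R.
Proof.
have H : (sauer_bound n d)%:R * 64^-1 ^+ d <= (65 / 64) ^+ n :> R.
  rewrite (_ : 65 / 64 = 64^-1 + 1); last by lra.
  by apply: sauer_bound_mulX_le; lra.
apply: le_trans (ler_wpM2l (exprn_ge0 d (ler0n R 64)) H).
by rewrite mulrCA -exprMn mulfV ?expr1n ?mulr1 ?pnatr_eq0.
Qed.

(* With [k = M %/ 8 >= 37 d]: [sauer_bound (2 M) d <= 64^d (65/64)^(2 M)
   <= 64^d (13/10)^(k+1)], so the left side is at most
   [7 (13/10) (64 (13/20)^37)^d <= 1/3]. *)
Lemma sauer_bound_halving_le (M d : nat) : (1 <= d)%N -> (300 * d <= M)%N ->
  7 * (sauer_bound (M * 2) d)%:R * (2^-1) ^+ (M %/ 8) <= 3^-1 :> R.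
Proof.
move=> d_ge1 dM; set k := (M %/ 8)%N.
have M2_le : (M * 2 <= 16 * k.+1)%N.
  by have := ltn_ceil M (isT : (0 < 8)%N); rewrite -/k; lia.
have k_ge : (37 * d <= k)%N.
  apply: leq_trans (leq_div2r 8 dM); rewrite leq_divRL //; lia.
have pow_M2 : (65 / 64) ^+ (M * 2) <= (13 / 10) ^+ k.+1 :> R.
  apply: (@le_trans _ _ ((65 / 64) ^+ (16 * k.+1))).
    by rewrite ler_eXn2l //; lra.
  have pow16 : (65 / 64) ^+ 16 <= 13 / 10 :> R by rewrite !exprS expr0; lra.
  rewrite exprM; apply: lerXn2r => //; rewrite ?nnegrE ?exprn_ge0 //; lra.
have pow_k : (13 / 20) ^+ k <= (13 / 20) ^+ (37 * d) :> R.
  by apply: ler_wiXn2l => //; lra.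
have pow_d : 64 ^+ d * (13 / 20) ^+ (37 * d) <= 100^-1 :> R.
  rewrite exprM -exprMn; apply: (@le_trans _ _ (100^-1 ^+ d)).
    by apply: lerXn2r; rewrite ?nnegrE ?exprS ?expr0; lra.
  by rewrite -(prednK d_ge1) exprS ger_pMr ?exprn_ile1; lra.
have pow64_ge0 : 0 <= 64 ^+ d :> R by rewrite exprn_ge0.
have halves_ge0 : 0 <= (2^-1) ^+ k :> R by rewrite exprn_ge0 ?invr_ge0.
have pow_halves : (13 / 10) ^+ k.+1 * (2^-1) ^+ k = 13 / 10 * (13 / 20) ^+ k :> R.
  by rewrite exprS -mulrA -exprMn; congr (_ * _ ^+ _); lra.
apply: (@le_trans _ _ (7 * (64 ^+ d * (13 / 10) ^+ k.+1) * (2^-1) ^+ k)).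
  apply: ler_wpM2r => //; apply: ler_wpM2l; first lra.
  exact: le_trans (sauer_bound_le_pow _ _) (ler_wpM2l pow64_ge0 pow_M2).
rewrite -!mulrA pow_halves; have := ler_wpM2l pow64_ge0 pow_k; lra.
Qed.

(** * Random samples and the epsilon-net theorem *)

Definition is_distr (m : nat) (D : 'I_m -> R) : Prop :=
  (forall i, 0 <= D i) /\ \sum_i D i = 1.

Definition sample_weight (m M : nat) (D : 'I_m -> R) (S : sample m M) : R :=
  \prod_(j < M) D (S j).

Section SampleExpectation.
Variables (m M : nat) (D : 'I_m -> R).
Hypothesis D_distr : is_distr D.

Lemma sample_weight_ge0 (S : sample m M) : 0 <= sample_weight D S.
Proof. by apply: prodr_ge0 => j _; apply: D_distr.1. Qed.

Lemma sum_sample_weight : \sum_(S : sample m M) sample_weight D S = 1.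
Proof.
rewrite -(bigA_distr_bigA (fun (_ : 'I_M) i => D i)) /=.
by rewrite big1 // => j _; rewrite D_distr.2.
Qed.

Lemma expect_sample_const (c : R) : expect_sample D (fun _ : sample m M => c) = c.
Proof. by rewrite /expect_sample -mulr_suml sum_sample_weight mul1r. Qed.

Lemma expect_sampleB (V W : sample m M -> R) :
  expect_sample D (fun S => V S - W S) = expect_sample D V - expect_sample D W.
Proof. by rewrite /expect_sample -sumrB; apply: eq_bigr => S _; rewrite mulrBr. Qed.

Lemma expect_sampleZ (c : R) (V : sample m M -> R) :
  expect_sample D (fun S => c * V S) = c * expect_sample D V.
Proof. by rewrite /expect_sample mulr_sumr; apply: eq_bigr => S _; rewrite mulrCA. Qed.

Lemma expect_sample_sum (n : nat) (V : 'I_n -> sample m M -> R) :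
  expect_sample D (fun S => \sum_(j < n) V j S) = \sum_(j < n) expect_sample D (V j).
Proof.
by rewrite /expect_sample exchange_big; apply: eq_bigr => S _; rewrite mulr_sumr.
Qed.

Lemma ler_expect_sample (V W : sample m M -> R) :
  (forall S, V S <= W S) -> expect_sample D V <= expect_sample D W.
Proof.
move=> VW; apply: ler_sum => S _.
by apply: ler_wpM2l; [exact: sample_weight_ge0 | exact: VW].
Qed.

Lemma expect_sample_coord (j0 : 'I_M) (x : 'I_m -> R) :
  expect_sample D (fun S => x (S j0)) = \sum_i D i * x i.
Proof.
pose f j i := D i * (if j == j0 then x i else 1).
transitivity (\sum_(S : sample m M) \prod_j f j (S j)).
  apply: eq_bigr => S _; rewrite /f big_split /=; congr (_ * _).
  by rewrite (bigD1 j0) //= eqxx big1 ?mulr1 // => j /negbTE ->.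
rewrite -(bigA_distr_bigA f) (bigD1 j0) //= [X in _ * X]big1 ?mulr1.
  by apply: eq_bigr => i _; rewrite /f eqxx.
by move=> j /negbTE j_neq; under eq_bigr do rewrite /f j_neq mulr1; rewrite D_distr.2.
Qed.

End SampleExpectation.

Definition mass (m : nat) (D : 'I_m -> R) (e : 'I_m -> bool) : R :=
  \sum_i D i * (e i)%:R.

Definition hits (m M : nat) (e : 'I_m -> bool) (S : sample m M) : nat :=
  \sum_(j < M) e (S j).

Lemma ler_mass (m : nat) (D : 'I_m -> R) (e e' : 'I_m -> bool) :
  is_distr D -> (forall i, e i -> e' i) -> mass D e <= mass D e'.
Proof.
move=> [D_ge0 _] ee'; apply: ler_sum => i _; rewrite ler_wpM2l // ler_nat.
by case: (e i) (ee' i) => // ->.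
Qed.

Section EpsilonNet.
Variables (m M d : nat) (D : 'I_m -> R) (E : ('I_m -> bool) -> Prop).
Hypothesis D_distr : is_distr D.

Local Notation sample := (sample m M).
Local Notation w := (sample_weight D).
Local Notation k := (M %/ 8)%N.
Local Notation swaps := {ffun 'I_M -> bool}.
Local Notation pattern := {ffun 'I_M * bool -> bool}.

Lemma expect_hits e :
  expect_sample D (fun S : sample => (hits e S)%:R) = M%:R * mass D e.
Proof.
under eq_fun do rewrite natr_sum.
rewrite expect_sample_sum.
under eq_bigr do rewrite (expect_sample_coord D_distr _ (fun i => (e i)%:R)).
by rewrite sumr_const card_ord mulr_natl.
Qed.

(* Markov's inequality for [M - hits e S], whose mean is below [3 M / 4]. *)
Lemma many_hits_prob e : (0 < M)%N -> 1 / 4 < mass D e ->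
  7^-1 <= expect_sample D (fun S : sample => (k <= hits e S)%N%:R).
Proof.
move=> M_gt0 mass_gt.
set few := expect_sample D (fun S : sample => (hits e S < k)%N%:R).
have few_ge0 : 0 <= few by apply: sumr_ge0 => S _; rewrite mulr_ge0 ?sample_weight_ge0.
have few_le : (M - k)%:R * few <= M%:R * (1 - mass D e).
  rewrite -expect_sampleZ mulrBr mulr1 -expect_hits.
  rewrite -[X in X - _](expect_sample_const M D_distr) -expect_sampleB.
  apply: ler_expect_sample => // S.
  have hits_le : (hits e S <= M)%N.
    rewrite -[X in (_ <= X)%N]card_ord -sum1_card; apply: leq_sum => j _; exact: leq_b1.
  case: ltnP => /= [hits_lt|_]; last by rewrite mulr0 subr_ge0 ler_nat.
  by rewrite mulr1 -natrB // ler_nat; lia.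
have -> : expect_sample D (fun S : sample => (k <= hits e S)%N%:R) = 1 - few.
  transitivity (expect_sample D (fun S : sample => 1 - (hits e S < k)%N%:R)).
    by apply: eq_bigr => S _; rewrite leqNgt; case: ltnP; rewrite ?subr0 ?subrr.
  by rewrite expect_sampleB expect_sample_const.
have k_le : 7 * M%:R <= 8 * (M - k)%:R :> R.
  have : (8 * k <= M)%N by rewrite mulnC leq_trunc_div.
  by rewrite -!natrM ler_nat; lia.
have M_pos : 0 < M%:R :> R by rewrite ltr0n.
have : 0 <= (8 * (M - k)%:R - 7 * M%:R) * few by rewrite mulr_ge0 ?subr_ge0.
have : 0 < M%:R * (mass D e - 1 / 4) by rewrite mulr_gt0 ?subr_gt0.
rewrite -(ler_pM2l M_pos); lra.
Qed.

Definition ghost_event (x : sample * sample) : bool :=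
  `[< exists e, [/\ E e, forall j, e (x.1 j) = false & (k <= hits e x.2)%N] >].

Definition double_weight (x : sample * sample) : R := w x.1 * w x.2.

Lemma double_weight_ge0 x : 0 <= double_weight x.
Proof. by rewrite mulr_ge0 ?sample_weight_ge0. Qed.

Lemma sum_double_weight : \sum_(x : sample * sample) double_weight x = 1.
Proof.
rewrite -(pair_bigA _ (fun S T => w S * w T)) /=.
under eq_bigr do rewrite -mulr_sumr (sum_sample_weight M D_distr) mulr1.
exact: sum_sample_weight.
Qed.

(* Symmetrization: a bad first sample makes the ghost event likely. *)
Lemma bad_le_ghost_event (B : pred sample) : (0 < M)%N ->
  (forall S, B S -> exists e, [/\ E e, forall j, e (S j) = false & 1 / 4 < mass D e]) ->
  expect_sample D (fun S => (B S)%:R) <=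
    7 * \sum_(x : sample * sample) double_weight x * (ghost_event x)%:R.
Proof.
move=> M_gt0 B_bad.
rewrite -(pair_bigA _ (fun S T => double_weight (S, T) * (ghost_event (S, T))%:R)).
rewrite mulr_sumr; apply: ler_sum => S _ /=.
under [X in _ <= 7 * X]eq_bigr do rewrite /double_weight /= -mulrA.
rewrite -mulr_sumr mulrCA; apply: ler_wpM2l; first exact: sample_weight_ge0.
have [/B_bad[e [Ee eS mass_gt]]|_] := boolP (B S); last first.
  by rewrite mulr_ge0 // sumr_ge0 // => T _; rewrite mulr_ge0 ?sample_weight_ge0.
rewrite -[X in X <= _](mulfV (_ : 7 != 0)) ?pnatr_eq0 // ler_wpM2l //.
apply: le_trans (many_hits_prob M_gt0 mass_gt) _; apply: ler_expect_sample => // T.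
case: leqP => /= [k_le|_]; last exact: ler0n.
by rewrite ler_nat lt0b; apply/asboolP; exists e.
Qed.

Definition swap_samples (s : swaps) (x : sample * sample) :
    sample * sample :=
  ([ffun j => if s j then x.2 j else x.1 j], [ffun j => if s j then x.1 j else x.2 j]).

Lemma swap_samplesK s : involutive (swap_samples s).
Proof.
by case=> S T; congr pair; apply/ffunP => j; rewrite !ffunE; case: (s j).
Qed.

Lemma double_weight_swap s x : double_weight (swap_samples s x) = double_weight x.
Proof.
rewrite /double_weight /sample_weight -!big_split /=.
by apply: eq_bigr => j _; rewrite !ffunE; case: (s j) => //; exact: mulrC.
Qed.

Definition double_point (x : sample * sample) (p : 'I_M * bool) : 'I_m :=
  if p.2 then x.2 p.1 else x.1 p.1.

Definition patterns (x : sample * sample) : {set pattern} :=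
  [set q : pattern |
   `[< exists2 e, E e & forall p, q p = e (double_point x p) >]].

Definition swap_bad (q : pattern) (s : swaps) : bool :=
  [forall j, ~~ q (j, s j)] && (k <= \sum_(j < M) q (j, ~~ s j))%N.

Lemma ghost_event_swap s x :
  ghost_event (swap_samples s x) -> exists2 q, q \in patterns x & swap_bad q s.
Proof.
case/asboolP=> e [Ee e_miss e_hits]; exists [ffun p => e (double_point x p)].
  by rewrite inE; apply/asboolP; exists e => // p; rewrite ffunE.
apply/andP; split.
  apply/forallP => j; rewrite ffunE /double_point /=.
  by move: (e_miss j); rewrite ffunE; case: (s j) => ->.
move: e_hits; congr (_ <= _)%N; apply: eq_bigr => j _.
by rewrite !ffunE /double_point /=; case: (s j).
Qed.

(* For a fixed pattern, each pair of coordinates [(j, false), (j, true)] that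
   is not all-zero halves the probability of [swap_bad]. *)
Lemma swap_bad_prob q :
  \sum_(s : swaps) (2^-1) ^+ M * (swap_bad q s)%:R <= (2^-1) ^+ k :> R.
Proof.
pose c j := (q (j, false) || q (j, true) : nat).
have count_le s : (\sum_(j < M) q (j, ~~ s j) <= \sum_(j < M) c j)%N.
  by apply: leq_sum => j _; rewrite /c; case: (s j); case: (q _); case: (q _).
have [c_lt|k_le] := ltnP (\sum_(j < M) c j) k.
  rewrite big1 ?exprn_ge0 ?invr_ge0 // => s _.
  suff /negbTE-> : ~~ swap_bad q s by rewrite mulr0.
  by apply/negP => /andP[_ /leq_trans/(_ (count_le s))]; rewrite leqNgt c_lt.
pose f j b := 2^-1 * (~~ q (j, b) : nat)%:R :> R.
apply: (@le_trans _ _ (\sum_(s : swaps) \prod_(j < M) f j (s j))).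
  apply: ler_sum => s _; have [/andP[/forallP q0 _]|_] := boolP (swap_bad q s).
    rewrite mulr1 -[M in _ ^+ M]card_ord -prodr_const (eq_bigr (fun j => f j (s j))) //.
    by move=> j _; rewrite /f q0 mulr1.
  by rewrite mulr0 prodr_ge0 // => j _; rewrite /f mulr_ge0 ?invr_ge0.
rewrite -(bigA_distr_bigA f) /=; apply: (@le_trans _ _ (\prod_(j < M) (2^-1) ^+ c j)).
  apply: ler_prod => j _; rewrite big_bool /f /c.
  by case: (q (j, false)); case: (q (j, true)); rewrite /= ?expr1 ?expr0; lra.
by rewrite prodrXr; apply: ler_wiXn2l => //; lra.
Qed.

Lemma swap_ghost_prob x :
  \sum_(s : swaps) (2^-1) ^+ M * (ghost_event (swap_samples s x))%:R
    <= #|patterns x|%:R * (2^-1) ^+ k :> R.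
Proof.
apply: (@le_trans _ _ (\sum_(s : swaps)
    (2^-1) ^+ M * \sum_(q in patterns x) (swap_bad q s)%:R : R)).
  apply: ler_sum => s _; apply: ler_wpM2l; first by rewrite exprn_ge0 ?invr_ge0.
  have [/ghost_event_swap[q qP q_bad]|_] := boolP (ghost_event _); last exact: sumr_ge0.
  by rewrite (bigD1 q) //= q_bad lerDl sumr_ge0.
under eq_bigr do rewrite mulr_sumr.
rewrite exchange_big /= -sum1_card natr_sum mulr_suml.
by apply: ler_sum => q _; rewrite mul1r swap_bad_prob.
Qed.

Hypothesis E_vc : forall A, shatters (fun _ => True) E A -> (size A <= d)%N.

Lemma card_patterns x : (#|patterns x| <= sauer_bound (M * 2) d)%N.
Proof.
have card_points : #|{: 'I_M * bool}| = (M * 2)%N.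
  by rewrite card_prod card_ord card_bool.
rewrite -card_points; apply: sauer_shelah => A /forallP A_sh.
have pattern_of (g : pattern) :
    exists2 e, E e & forall p, p \in A -> e (double_point x p) = g p.
  have /existsP[q /andP[]] := A_sh g.
  rewrite inE => /asboolP[e Ee qe] /forallP qg; exists e => // p pA.
  by move/implyP/(_ pA)/eqP: (qg p); rewrite qe.
have inj : {in A &, injective (double_point x)}.
  move=> p1 p2 p1A p2A eq12; apply/eqP; apply: contraT => p12.
  have [e _ eg] := pattern_of [ffun p => p == p1].
  by move: (eg p1 p1A) (eg p2 p2A); rewrite !ffunE eq12 eqxx eq_sym (negbTE p12) => ->.
rewrite cardE -(size_map (double_point x)); apply: E_vc; split=> //.
  by rewrite map_inj_in_uniq ?enum_uniq // => p1 p2; rewrite !mem_enum; exact: inj.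
move=> lab; have [e Ee eg] := pattern_of [ffun p => lab (double_point x p)].
by exists e; split=> // _ /mapP[p pA ->]; rewrite eg ?ffunE // -mem_enum.
Qed.

Lemma ghost_event_prob :
  \sum_(x : sample * sample) double_weight x * (ghost_event x)%:R
    <= (sauer_bound (M * 2) d)%:R * (2^-1) ^+ k.
Proof.
set F := fun x => double_weight x * (ghost_event x)%:R.
have sum_swap s :
    \sum_x F x = \sum_x double_weight x * (ghost_event (swap_samples s x))%:R.
  rewrite (reindex_inj (can_inj (swap_samplesK s))) /=.
  by apply: eq_bigr => x _; rewrite /F double_weight_swap.
have sum_uniform : \sum_(s : swaps) (2^-1) ^+ M = 1 :> R.
  rewrite sumr_const card_ffun card_bool card_ord -(mulr_natr ((2^-1) ^+ M)) natrX.
  by rewrite -exprMn mulVf ?expr1n ?pnatr_eq0.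
have -> : \sum_x F x = \sum_(s : swaps) (2^-1) ^+ M * \sum_x F x.
  by rewrite -mulr_suml sum_uniform mul1r.
under eq_bigr => s _ do rewrite (sum_swap s) mulr_sumr.
rewrite exchange_big /=.
set bound := _ * _ ^+ k.
apply: (@le_trans _ _ (\sum_(x : sample * sample) double_weight x * bound)); last first.
  by rewrite -mulr_suml sum_double_weight mul1r.
apply: ler_sum => x _; under eq_bigr do rewrite mulrCA.
rewrite -mulr_sumr; apply: ler_wpM2l; first exact: double_weight_ge0.
apply: le_trans (swap_ghost_prob x) _; rewrite ler_wpM2r ?exprn_ge0 ?invr_ge0 //.
by rewrite ler_nat card_patterns.
Qed.

Lemma eps_net (B : pred sample) : E (fun _ => false) -> (300 * d <= M)%N ->
  (forall S, B S -> exists e, [/\ E e, forall j, e (S j) = false & 1 / 4 < mass D e]) ->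
  expect_sample D (fun S => (B S)%:R) <= 3^-1.
Proof.
move=> E0 dM B_bad; have [d0|d_gt0] := posnP d.
  have E_zero e i : E e -> e i = false.
    move=> Ee; apply/negP => ei.
    suff /E_vc : shatters (fun _ => True) E [:: i] by rewrite d0.
    split=> // lab; exists (if lab i then e else fun _ => false).
    by split; [case: (lab i) | move=> _ /[1!inE] /eqP ->; case: (lab i)].
  rewrite /expect_sample big1 ?invr_ge0 // => S _.
  have [/B_bad[e [Ee _]]|_] := boolP (B S).
    rewrite /mass big1 => [|i _]; [lra | by rewrite E_zero // mulr0].
  by rewrite mulr0.
have M_gt0 : (0 < M)%N by lia.
apply: le_trans (bad_le_ghost_event M_gt0 B_bad) _.
apply: le_trans (sauer_bound_halving_le d_gt0 dM); rewrite -mulrA ler_wpM2l //.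
exact: ghost_event_prob.
Qed.

End EpsilonNet.

(** * The boosting loop *)

Lemma reweight_distr (m T : nat) xs ys (D : 'I_m -> R) g :
  is_distr D -> is_distr (reweight T xs ys D g).
Proof.
case=> D_ge0 D_sum1; rewrite /reweight /=.
set a := ln _ / 2.
set w := fun i => D i * exp (if e2e_err T xs ys g i then a else - a).
have exp_gt0 (y : R) : 0 < exp y by apply/RltP/exp_pos.
have w_ge0 i : 0 <= w i by rewrite /w mulr_ge0 // ltW.
have w_sum_neq0 : \sum_k w k != 0.
  apply/eqP => /(psumr_eq0P (fun i _ => w_ge0 i)) w0.
  move: D_sum1; rewrite big1 => [/esym/eqP|i _]; first by rewrite oner_eq0.
  by move/eqP: (w0 i isT); rewrite mulf_eq0 [exp _ == 0]gt_eqF // orbF => /eqP.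
split=> [i|]; first by apply: divr_ge0; [|apply: sumr_ge0 => k _]; apply: w_ge0.
by rewrite -mulr_suml divff.
Qed.

Section BoostingLoop.
Variables (m M T : nat) (xs : 'I_m -> seq bool) (ys : 'I_m -> bool).
Variables (adv : history m M T -> sample m M -> (seq bool -> bool))
          (lrn : history m M T -> sample m M -> observation M T -> (seq bool -> bool)).

Definition observed_cot (hist : history m M T) (S : sample m M) : observation M T :=
  [ffun j => CoT T (adv hist S) (xs (S j))].

Definition round_fails (D : 'I_m -> R) hist (S : sample m M) : bool :=
  ~~ (weighted_err T xs ys D (lrn hist S (observed_cot hist S)) <= 1 / 4).

Variable q : R.
Hypothesis q_ge0 : 0 <= q.
Hypothesis round_fails_le : forall D hist, is_distr D ->
  expect_sample D (fun S => (round_fails D hist S)%:R) <= q.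

Lemma inner_ge l D hist cont a : is_distr D -> a <= 1 ->
  (forall fh e h, a <= cont fh e h) ->
  a - q ^+ l <= inner xs ys adv lrn l D hist cont.
Proof.
move=> D_distr a_le1 cont_ge; elim: l hist => [|l IH] hist /=.
  by rewrite expr0 subr_le0.
apply: (@le_trans _ _ (expect_sample D
          (fun S => a - q ^+ l * (round_fails D hist S)%:R))).
  rewrite expect_sampleB // expect_sample_const // expect_sampleZ.
  rewrite lerD2l lerN2 exprSr.
  by apply: ler_wpM2l (round_fails_le _ _); rewrite ?exprn_ge0.
apply: ler_expect_sample => // S; rewrite /round_fails /observed_cot.
by case: ifP => _ /=; rewrite ?mulr0 ?subr0 ?mulr1.
Qed.

Lemma outer_ge L n D hist : is_distr D ->
  1 - n%:R * q ^+ L <= outer xs ys adv lrn L n D hist.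
Proof.
have qL_ge0 : 0 <= q ^+ L by rewrite exprn_ge0.
elim: n D hist => [|n IH] D hist D_distr /=; first by rewrite mul0r subr0.
have -> : 1 - n.+1%:R * q ^+ L = (1 - n%:R * q ^+ L) - q ^+ L.
  by rewrite mulrSr mulrDl mul1r opprD addrA.
apply: inner_ge => // [|fh e h]; first by rewrite gerBl mulr_ge0.
case: ifP => _; first by rewrite gerBl mulr_ge0.
exact/IH/reweight_distr.
Qed.

End BoostingLoop.

Lemma exp_nat_le (n : nat) : exp n%:R <= 3 ^+ n.
Proof.
have exp_ge0 (y : R) : 0 <= exp y by apply/ltW/RltP/exp_pos.
elim: n => [|n IH]; first by rewrite mulr0n expr0 (exp_0 : exp 0 = 1).
rewrite exprSr -addn1 natrD exp_plus ler_pM //.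
by move/RleP: exp_le_3; rewrite (_ : IZR 3 = 3) // IZRposE INRE.
Qed.

Lemma union_bound_inner_iters (K : nat) (delta : R) : 0 < delta ->
  1 - delta / 2 <= 1 - K%:R * (3^-1) ^+ (inner_iters K delta).
Proof.
move=> delta_gt0; case: K => [|K]; first by rewrite mul0r; lra.
set L := inner_iters K.+1 delta; set y := 2 * K.+1%:R / delta.
have y_gt0 : 0 < y by rewrite divr_gt0 // mulr_gt0 // ltr0n.
have lny_le : ln y <= L%:R.
  have [lny_le0|lny_gt0] := lerP (ln y) 0; first exact: le_trans lny_le0 _.
  rewrite /L /inner_iters -/y natr_absz ger0_norm ?ceil_ge //.
  by rewrite ceil_ge0; lra.
have y_le : y <= 3 ^+ L.
  rewrite -[y]exp_ln; last exact/RltP.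
  apply: le_trans (exp_nat_le L); move: lny_le; rewrite le_eqVlt.
  by case/orP=> [/eqP ->//|/RltP/exp_increasing/RltP/ltW].
have pow_gt0 : 0 < 3 ^+ L :> R by rewrite exprn_gt0.
rewrite exprVn lerD2l lerN2 ler_pdivrMr // mulrAC ler_pdivlMr ?ltr0n //.
by move: y_le; rewrite /y ler_pdivrMr // mulrC [delta * _]mulrC.
Qed.

Lemma boost_success_ge (m M T K : nat) (xs : 'I_m -> seq bool) (ys : 'I_m -> bool)
    (adv : history m M T -> sample m M -> (seq bool -> bool))
    (lrn : history m M T -> sample m M -> observation M T -> (seq bool -> bool))
    (delta : R) :
  (0 < m)%N -> 0 < delta ->
  (forall D hist, is_distr D ->
     expect_sample D (fun S => (round_fails xs ys adv lrn D hist S)%:R) <= 3^-1) ->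
  1 - delta / 2 <= boost_success_prob xs ys adv lrn (inner_iters K delta) K.
Proof.
move=> m_gt0 delta_gt0 fails_le.
apply: le_trans (union_bound_inner_iters K delta_gt0) _.
apply: (outer_ge (T := T)) => //; first by rewrite invr_ge0.
split=> [i|]; first by rewrite divr_ge0 ?ler0n.
have m_neq0 : m%:R != 0 :> R by rewrite pnatr_eq0 -lt0n.
by rewrite sumr_const card_ord div1r -(mulr_natr (m%:R)^-1) mulVf.
Qed.

(** * Rounds supervised by chains of thought *)

(* Xor-ing with the fixed bits [b] permutes the labelings, and [phi] is
   injective on every set shattered by [E]. *)
Lemma shattered_pullback_size_le (V U : eqType) (dom : U -> Prop)
    (H : (U -> bool) -> Prop) (d : nat) (phi : V -> U) (b : V -> bool)
    (E : (V -> bool) -> Prop) :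
  (forall A, shatters dom H A -> (size A <= d)%N) -> (forall v, dom (phi v)) ->
  (forall e, E e -> exists2 h, H h & forall v, e v = (h (phi v) != b v)) ->
  forall A, shatters (fun _ => True) E A -> (size A <= d)%N.
Proof.
move=> H_vc phi_dom E_H A [A_uniq _ A_sh].
have H_sh lab : exists2 h, H h & forall v, v \in A -> h (phi v) = lab v.
  have [e [Ee e_lab]] := A_sh (fun v => lab v (+) b v).
  have [h Hh e_h] := E_H e Ee; exists h => // v vA.
  by move: (e_lab v vA); rewrite e_h; case: (h _); case: (lab v); case: (b v).
have phi_inj : {in A &, injective phi}.
  move=> v v' vA v'A eq_phi; apply/eqP; apply: contraT => vv'.
  have [h _ h_lab] := H_sh (fun u => u == v).
  move: (h_lab v vA) (h_lab v' v'A).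
  by rewrite eq_phi eqxx [v' == v]eq_sym (negbTE vv') => ->.
rewrite -(size_map phi); apply: H_vc; split.
- by rewrite map_inj_in_uniq.
- by move=> _ /mapP[v _ ->].
- move=> lab; have [h Hh h_lab] := H_sh (fun v => lab (phi v)).
  by exists h; split=> // _ /mapP[v vA ->]; rewrite h_lab.
Qed.

Lemma e2e_eq_of_CoT (T : nat) (g g' : seq bool -> bool) (x : seq bool) :
  (0 < T)%N -> CoT T g x = CoT T g' x -> e2e T g x = e2e T g' x.
Proof.
move=> T_gt0; have last_lt : (T.-1 < T)%N by rewrite ltn_predL.
move/(congr1 (fun t => tnth t (Ordinal last_lt))).
by rewrite /CoT !tnth_mktuple /= prednK.
Qed.

Lemma leq_budget (c : R) (d : nat) : 300 <= c -> (300 * d <= budget c d)%N.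
Proof.
move=> c_ge; have cd_ge0 : 0 <= c * d%:R by rewrite mulr_ge0 // (le_trans _ c_ge).
rewrite -(ler_nat R) /budget natr_absz ger0_norm ?ceil_ge0 //; last lra.
by rewrite natrM; apply: le_trans (ceil_ge _); rewrite ler_wpM2r.
Qed.

Section RoundFailure.
Variables (X : seq bool -> Prop) (F : (seq bool -> bool) -> Prop) (T m M d : nat).
Variables (xs : 'I_m -> seq bool) (ys : 'I_m -> bool) (fstar : seq bool -> bool).
Hypotheses (T_gt0 : (0 < T)%N) (xs_X : forall i, X (xs i)).
Hypothesis ys_fstar : forall i, ys i = e2e T fstar (xs i).
Hypothesis budget_ok : (300 * d <= M)%N.
Variables (adv : history m M T -> sample m M -> (seq bool -> bool))
          (lrn : history m M T -> sample m M -> observation M T -> (seq bool -> bool)).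
Hypothesis adv_ok : forall hist S, F (adv hist S) /\
  forall x, X x -> e2e T (adv hist S) x = e2e T fstar x.
Hypothesis lrn_ok : forall hist (S : sample m M) (o : observation M T),
  (exists g, F g /\ forall j, CoT T g (xs (S j)) = o j) ->
  F (lrn hist S o) /\ forall j, CoT T (lrn hist S o) (xs (S j)) = o j.
Variables (D : 'I_m -> R) (hist : history m M T).
Hypothesis D_distr : is_distr D.

Let learned S := lrn hist S (observed_cot xs adv hist S).

Lemma learned_consistent S :
  F (learned S) /\ forall j, CoT T (learned S) (xs (S j)) = CoT T (adv hist S) (xs (S j)).
Proof.
have [|F_l CoT_l] := @lrn_ok hist S (observed_cot xs adv hist S).
  by exists (adv hist S); split=> [|j]; [exact: (adv_ok hist S).1 | rewrite ffunE].
by split=> // j; rewrite CoT_l ffunE.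
Qed.

Lemma learned_fits_sample S j : e2e T (learned S) (xs (S j)) = ys (S j).
Proof.
rewrite (e2e_eq_of_CoT T_gt0 ((learned_consistent S).2 j)).
by rewrite (adv_ok hist S).2 // ys_fstar.
Qed.

Lemma adaptive_round_fails_le :
  (forall A, shatters X (e2e_class T F) A -> (size A <= d)%N) -> F fstar ->
  expect_sample D (fun S => (round_fails xs ys adv lrn D hist S)%:R) <= 3^-1.
Proof.
move=> vc F_fstar; pose E e := exists2 g, F g & forall i, e i = e2e_err T xs ys g i.
have E_vc A : shatters (fun _ => True) E A -> (size A <= d)%N.
  apply: (shattered_pullback_size_le vc xs_X) => e [g Fg e_g].
  by exists (e2e T g); [exists g | move=> i; rewrite e_g].
have E0 : E (fun _ => false) by exists fstar => // i; rewrite /e2e_err ys_fstar eqxx.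
apply: (eps_net D_distr E_vc) E0 budget_ok _ => S; rewrite /round_fails -ltNge.
exists (e2e_err T xs ys (learned S)); split=> //.
- by exists (learned S) => //; exact: (learned_consistent S).1.
- by move=> j; rewrite /e2e_err learned_fits_sample eqxx.
Qed.

Lemma oblivious_round_fails_le : (0 < m)%N ->
  (forall A, shatters (fun p => X p.1) (Lcot_class T F) A -> (size A <= d)%N) ->
  (forall S S', adv hist S = adv hist S') ->
  expect_sample D (fun S => (round_fails xs ys adv lrn D hist S)%:R) <= 3^-1.
Proof.
move=> m_gt0 vc adv_fixed; pose f0 := adv hist [ffun _ => Ordinal m_gt0].
have adv_f0 S : adv hist S = f0 by apply: adv_fixed.
pose E e := exists2 g, F g & forall i, e i = (CoT T f0 (xs i) != CoT T g (xs i)).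
have E_vc A : shatters (fun _ => True) E A -> (size A <= d)%N.
  apply: (@shattered_pullback_size_le _ _ _ _ _ (fun i => (xs i, CoT T f0 (xs i)))
            (fun _ => false) _ vc) => // e [g Fg e_g].
  exists (fun p : seq bool * T.-tuple bool => p.2 != CoT T g p.1); first by exists g.
  by move=> i; rewrite e_g; case: (_ != _).
have E0 : E (fun _ => false).
  by exists f0 => [|i]; rewrite ?eqxx //; exact: (adv_ok hist _).1.
apply: (eps_net D_distr E_vc) E0 budget_ok _ => S; rewrite /round_fails -ltNge => err_gt.
exists (fun i => CoT T f0 (xs i) != CoT T (learned S) (xs i)); split.
- by exists (learned S) => //; exact: (learned_consistent S).1.
- by move=> j; rewrite -(adv_f0 S) (learned_consistent S).2 eqxx.
- apply: lt_le_trans err_gt (ler_mass D_distr _) => i; apply: contraTneq => CoT_eq.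
  rewrite /e2e_err -(e2e_eq_of_CoT T_gt0 CoT_eq) -(adv_f0 S).
  by rewrite (adv_ok hist S).2 // ys_fstar eqxx.
Qed.

End RoundFailure.

Theorem lemma9p4 :
  exists c : R, 0 < c /\
  forall (X : seq bool -> Prop) (F : (seq bool -> bool) -> Prop)
         (T m K : nat) (xs : 'I_m -> seq bool) (ys : 'I_m -> bool)
         (fstar : seq bool -> bool) (delta : R),
    (0 < T)%N -> (0 < m)%N ->
    (forall i, X (xs i)) ->
    F fstar -> (forall i, ys i = e2e T fstar (xs i)) ->
    0 < delta < 1 ->
    (* adaptive adversary (may depend on the current sample set) *)
    (forall d : nat, VCdim_is X (e2e_class T F) d ->
     forall (adv : history m (budget c d) T -> sample m (budget c d) ->
                   (seq bool -> bool))
            (lrn : history m (budget c d) T -> sample m (budget c d) ->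
                   observation (budget c d) T -> (seq bool -> bool)),
       (forall hist (S : sample m (budget c d)), F (adv hist S) /\
          forall x, X x -> e2e T (adv hist S) x = e2e T fstar x) ->
       (forall hist (S : sample m (budget c d)) (o : observation (budget c d) T),
          (exists g, F g /\ forall j, CoT T g (xs (S j)) = o j) ->
          F (lrn hist S o) /\ forall j, CoT T (lrn hist S o) (xs (S j)) = o j) ->
       1 - delta / 2 <=
         boost_success_prob xs ys adv lrn (inner_iters K delta) K)
    /\
    (* relaxed protocol: f_{k,l} fixed before S_{k,l} is observed *)
    (forall d : nat, VCdim_is (fun p => X p.1) (Lcot_class T F) d ->
     forall (adv : history m (budget c d) T -> sample m (budget c d) ->
                   (seq bool -> bool))
            (lrn : history m (budget c d) T -> sample m (budget c d) ->
                   observation (budget c d) T -> (seq bool -> bool)),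
       (forall hist (S S' : sample m (budget c d)), adv hist S = adv hist S') ->
       (forall hist (S : sample m (budget c d)), F (adv hist S) /\
          forall x, X x -> e2e T (adv hist S) x = e2e T fstar x) ->
       (forall hist (S : sample m (budget c d)) (o : observation (budget c d) T),
          (exists g, F g /\ forall j, CoT T g (xs (S j)) = o j) ->
          F (lrn hist S o) /\ forall j, CoT T (lrn hist S o) (xs (S j)) = o j) ->
       1 - delta / 2 <=
         boost_success_prob xs ys adv lrn (inner_iters K delta) K).
Proof.
exists 300; split=> [|X F T m K xs ys fstar delta T_gt0 m_gt0 xs_X F_fstar ys_fstar].
  by rewrite ltr0n.
case/andP=> delta_gt0 _.
split=> [d [_ vc] adv lrn adv_ok lrn_ok | d [_ vc] adv lrn adv_fixed adv_ok lrn_ok];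
  apply: boost_success_ge => // D hist D_distr;
  have budget_ok := leq_budget d (lexx 300).
- exact (adaptive_round_fails_le T_gt0 xs_X ys_fstar budget_ok adv_ok lrn_ok
    hist D_distr vc F_fstar).
- exact (oblivious_round_fails_le T_gt0 xs_X ys_fstar budget_ok adv_ok lrn_ok
    D_distr m_gt0 vc (adv_fixed hist)).
Qed.
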